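(* Let $G$ be a connected graph with $E(G)\neq\emptyset$, and let $x,y\in V(G)$ be distinct vertices such that $G+xy$ has no cutvertex. Then there exists an $x$--$y$ bond $F$ in $G$ such that $\mathrm{pw}(G-y;x)\le 3|F|-2$; moreover, if $G$ itself has no cutvertex, then $F$ can be chosen so that $\mathrm{pw}(G-y;x)\le 3|F|-3$.
   Context: A bond of a graph $G$ is an inclusion-wise minimal set of edges $F$ such that $G-F$ has more connected components than $G$. For distinct vertices $x,y$, an $x$--$y$ bond is a bond $F$ such that $x$ and $y$ lie in different components of $G-F$. $G+xy$ denotes $G$ with the edge $xy$ added (if not already present). A path-decomposition of $H$ is a sequence $(X_0,\dots,X_s)$ of subsets of $V(H)$ such that for each vertex $v$ the indices $i$ with $v\in X_i$ form a non-empty interval, and each edge has both ends in some $X_i$; its width is $\max_i|X_i|-1$. For $x\in V(H)$, $\mathrm{pw}(H;x)$ denotes the minimum width of a path-decomposition $(X_0,\dots,X_s)$ of $H$ with $x\in X_0$. *)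

(* Finite simple graphs: a vertex set V : {set T} inside a
   finType T, with a symmetric irreflexive adjacency relation e : rel T
   (only edges between vertices of V count). *)
From mathcomp Require Import all_boot.
From mathcomp Require Import boolp.

Set Implicit Arguments.
Unset Strict Implicit.
Unset Printing Implicit Defensive.

Section Graphs.
Variable T : finType.

Definition adj (V : {set T}) (e : rel T) : rel T :=
  [rel u v | [&& u \in V, v \in V & e u v]].

Definition comps (V : {set T}) (e : rel T) : {set {set T}} :=
  [set [set w in V | connect (adj V e) u w] | u in V].
Definition ncomp (V : {set T}) (e : rel T) : nat := #|comps V e|.

Definition connected (V : {set T}) (e : rel T) : Prop := ncomp V e = 1.

Definition edges (V : {set T}) (e : rel T) : {set {set T}} :=
  [set [set u; v] | u in V, v in V & e u v].

Definition delE (e : rel T) (F : {set {set T}}) : rel T :=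
  [rel u v | e u v && ([set u; v] \notin F)].

Definition addE (e : rel T) (x y : T) : rel T :=
  [rel u v | [|| e u v, (u == x) && (v == y) | (u == y) && (v == x)]].

Definition cutvertex (V : {set T}) (e : rel T) (v : T) : Prop :=
  v \in V /\ ncomp V e < ncomp (V :\ v) e.

Definition is_bond (V : {set T}) (e : rel T) (F : {set {set T}}) : Prop :=
  [/\ F \subset edges V e,
      ncomp V e < ncomp V (delE e F) &
      forall F' : {set {set T}}, F' \proper F ->
        ~ (ncomp V e < ncomp V (delE e F'))].

Definition xy_bond (V : {set T}) (e : rel T) (x y : T) (F : {set {set T}}) : Prop :=
  is_bond V e F /\ ~~ connect (adj V (delE e F)) x y.

Definition path_decomp (V : {set T}) (e : rel T) (X : seq {set T}) : Prop :=
  [/\ 0 < size X,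
      all (fun B : {set T} => B \subset V) X,
      forall v, v \in V -> exists i j, i <= j < size X /\
          forall k, k < size X -> (v \in nth set0 X k) = (i <= k <= j) &
      forall u v, u \in V -> v \in V -> e u v ->
        exists2 i, i < size X & (u \in nth set0 X i) && (v \in nth set0 X i)].

Definition width (X : seq {set T}) : nat := (foldr maxn 0 [seq #|B| | B : {set T} <- X]).-1.

Definition pw_le (V : {set T}) (e : rel T) (x : T) : pred nat :=
  fun k => `[< exists X, [/\ path_decomp V e X, x \in head set0 X & width X <= k] >].

(* pw(H; x): minimum width of a path-decomposition with x in X_0
   (defined as 0 in the degenerate case where none exists, i.e. x \notin V) *)
Definition pw (V : {set T}) (e : rel T) (x : T) : nat :=
  match pselect (exists k, pw_le V e x k) with
  | left h => ex_minn h
  | right _ => 0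
  end.

End Graphs.

(* Lemma 3.4.  We prove the stronger bound pw(G - y; x) <= |F| for a suitable
   x--y bond F.  Call A an x-side when x is in A, y is not, and both A and
   V - A are connected; its boundary (the edges from A to V - A) is then an
   x--y bond.  Since G + xy has no cutvertex, an x-side other than V - y can
   always absorb a neighbouring vertex of V - A - y and stay an x-side (take
   the candidate cutting off the fewest vertices from y).  This gives an
   ordering of V - y from x whose nonempty prefixes are x-sides.  In the usual
   path-decomposition of an ordering each bag is the current vertex plus the
   frontier of the prefix, so its width is at most the largest prefix
   boundary, which we take as F.  If G has no cutvertex and |F| = 1, G is the
   single edge xy and pw(G - y; x) = 0.
   The file develops general facts on walks, components and path-width, then
   the decomposition of an ordering, then x-sides, and ends with the theorem. *)

From mathcomp Require Import all_boot.
From mathcomp Require Import boolp zify.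

Set Implicit Arguments.
Unset Strict Implicit.
Unset Printing Implicit Defensive.

Section GraphFacts.
Variable T : finType.
Implicit Types (S : {set T}) (g : rel T).

Definition linked S g := forall a b, a \in S -> b \in S -> connect (adj S g) a b.

Lemma adj_sym S g : symmetric g -> symmetric (adj S g).
Proof. by move=> sg u v; rewrite /adj /= sg andbCA. Qed.

Lemma linked_hub S g h : symmetric g ->
  (forall b, b \in S -> connect (adj S g) b h) -> linked S g.
Proof.
move=> sg to_h a b aS bS; apply: connect_trans (to_h a aS) _.
by rewrite (sym_connect_sym (adj_sym S sg)) to_h.
Qed.

Lemma connect_cross g (P : pred T) r d :
  connect g r d -> P r -> ~~ P d -> exists p q, [/\ g p q, P p & ~~ P q].
Proof.
case/connectP=> w pth ->; elim: w r pth => [|z w IH] r /=; first by move=> _ ->.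
case/andP=> grz pth Pr nPd; case Pz: (P z); first exact: IH pth Pz nPd.
by exists r, z; rewrite Pz.
Qed.

Lemma connect_out S g u w : u \notin S -> connect (adj S g) u w -> u = w.
Proof. by move=> uS /connectP [[|z s] /= pth ->] //; move: pth; rewrite /adj /= (negbTE uS). Qed.

Lemma connect_adj_mono S S' g g' :
  (forall p q, p \in S -> q \in S -> g p q -> adj S' g' p q) ->
  forall u w, connect (adj S g) u w -> connect (adj S' g') u w.
Proof.
move=> H; apply: connect_sub => p q /and3P [pS qS gpq]; apply: connect1; exact: H.
Qed.

Lemma connect_adj_subset S S' g u w :
  S \subset S' -> connect (adj S g) u w -> connect (adj S' g) u w.
Proof. by move=> sub; apply: connect_adj_mono => p q pS qS gpq; rewrite /adj /= !(subsetP sub). Qed.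

(* Deleting a vertex p that does not reach d keeps every walk towards d:
   all vertices of such a walk reach d, so none of them is p. *)
Lemma connect_avoid S g p z d :
  ~~ connect (adj S g) p d -> connect (adj S g) z d -> connect (adj (S :\ p) g) z d.
Proof.
move=> npd /connectP [w pth dE]; elim: w z pth dE => [|v w IH] z /=; first by move=> _ ->.
case/andP=> azv pth dE.
have vd : connect (adj S g) v d by apply/connectP; exists w.
have zp : z != p by apply: contraNneq npd => <-; exact: connect_trans (connect1 azv) vd.
have vp : v != p by apply: contraNneq npd => <-.
apply: connect_trans (IH v pth dE); apply: connect1.
by move: azv; rewrite /adj /= !in_setD1 zp vp.
Qed.

(* If d reaches u inside S (u != d), then some neighbour of u in S reaches d
   without passing through u: follow the walk after its last visit to u. *)
Lemma last_exit S g u d : symmetric g -> u != d -> connect (adj S g) d u ->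
  exists b, adj S g u b /\ connect (adj (S :\ u) g) b d.
Proof.
move=> sg ud du.
pose P z := connect (adj (S :\ u) g) z d.
have nPu : ~~ P u.
  by apply/negP => /(connect_out (negbT (setD11 _ _))) /eqP; rewrite (negbTE ud).
have [b [c [/and3P [bS cS gbc] Pb nPc]]] := connect_cross (P := P) du (connect0 _ d) nPu.
have bu : b != u by apply: contraNneq nPu => <-.
have cu : c = u.
  apply: contraNeq nPc => cu; apply: connect_trans (connect1 _) Pb.
  by rewrite /adj /= !in_setD1 cu bu cS bS sg.
by exists b; split=> //; rewrite -cu /adj /= bS cS sg gbc.
Qed.

Lemma ncomp_le1_linked S g : ncomp S g <= 1 -> linked S g.
Proof.
move=> /card_le1_eqP H a b aS bS.
have /setP /(_ b) := H _ _ (imset_f _ aS) (imset_f _ bS).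
by rewrite !inE bS connect0 /= => <-.
Qed.

Lemma linked_ncomp_le1 S g : linked S g -> ncomp S g <= 1.
Proof.
move=> H; apply/card_le1_eqP => C1 C2 /imsetP [u1 u1S ->] /imsetP [u2 u2S ->].
apply/setP => w; rewrite !inE; case wS: (w \in S) => //=.
by apply/idP/idP; apply: connect_trans; apply: H.
Qed.

Lemma ncomp_gt1 S g a b :
  a \in S -> b \in S -> ~~ connect (adj S g) a b -> 1 < ncomp S g.
Proof.
move=> aS bS nab; apply/card_gt1P.
exists [set w in S | connect (adj S g) a w], [set w in S | connect (adj S g) b w].
split; [exact: imset_f | exact: imset_f |].
by apply: contraNneq nab => /setP /(_ b); rewrite !inE bS connect0 /= => ->.
Qed.

Lemma no_cutvertex_linked S g : linked S g -> (forall v, ~ cutvertex S g v) ->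
  forall z, z \in S -> linked (S :\ z) g.
Proof.
move=> lS ncv z zS; apply: ncomp_le1_linked; rewrite leqNgt; apply/negP => h.
by apply: (ncv z); split; last exact: leq_ltn_trans (linked_ncomp_le1 lS) h.
Qed.

Lemma thin_cut_cutvertex S g (P : pred T) a b c :
  linked S g -> a \in S -> b \in S :\ a -> c \in S :\ a -> P b -> ~~ P c ->
  (forall p q, p \in S -> q \in S -> P p -> ~~ P q -> g p q -> (p == a) || (q == a)) ->
  cutvertex S g a.
Proof.
move=> lS aS bS cS Pb nPc thin; split=> //.
apply: leq_ltn_trans (linked_ncomp_le1 lS) (ncomp_gt1 bS cS _); apply/negP => bc.
have [p [q [/and3P [pS qS gpq] Pp nPq]]] := connect_cross bc Pb nPc.
move: pS qS; rewrite !in_setD1 => /andP [pa pS] /andP [qa qS].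
by move: (thin p q pS qS Pp nPq gpq); rewrite (negbTE pa) (negbTE qa).
Qed.

Lemma linked_sub S g g' : subrel g g' -> linked S g -> linked S g'.
Proof.
move=> gg' lS a b aS bS; apply: connect_adj_mono (lS a b aS bS) => p q pS qS gpq.
by rewrite /adj /= pS qS gg'.
Qed.

Lemma pw_leP S g z k : pw_le S g z k -> pw S g z <= k.
Proof. by rewrite /pw => h; case: pselect => // hh; case: ex_minnP => m _; apply. Qed.

Lemma pw_le_card S g z : z \in S -> pw S g z <= #|S|.-1.
Proof.
move=> zS; apply: pw_leP; apply/asboolP; exists [:: S]; split=> //.
split=> //=; first by rewrite subxx.
  by move=> v vS; exists 0, 0; split=> // [[|k]] //; rewrite vS.
by move=> u v uS vS _; exists 0; rewrite //= uS vS.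
Qed.

End GraphFacts.

Lemma bigmax_ltn (I : finType) (P : pred I) (F : I -> nat) n :
  0 < n -> (forall i, P i -> F i < n) -> \max_(i | P i) F i < n.
Proof.
move=> n0 H; rewrite -(prednK n0) ltnS; apply/bigmax_leqP => i Pi.
by rewrite -ltnS prednK // H.
Qed.

Lemma exists_argmax n (f : nat -> nat) :
  0 < n -> exists2 k, k < n & forall j, j < n -> f j <= f k.
Proof.
move=> n0; case: (@arg_maxnP _ (Ordinal n0) xpredT (fun i : 'I_n => f i) isT) => k _ kmax.
by exists k => // j jn; exact: (kmax (Ordinal jn)).
Qed.

Definition prefix_set (T : finType) (s : seq T) k := [set z | index z s < k].

Definition frontier (T : finType) (W : {set T}) (g : rel T) (A : {set T}) :=
  [set v in A | [exists w, (w \in W :\: A) && g v w]].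

Lemma prefix_set0 (T : finType) (s : seq T) : prefix_set s 0 = set0.
Proof. by apply/setP => z; rewrite !inE ltn0. Qed.

Lemma prefix_set_cons (T : finType) (v : T) t k : prefix_set (v :: t) k.+1 = v |: prefix_set t k.
Proof. by apply/setP => z; rewrite !inE /= eq_sym; case: (z == v). Qed.

Lemma frontier0 (T : finType) (W : {set T}) g : frontier W g set0 = set0.
Proof. by apply/setP => v; rewrite !inE. Qed.

Section Enumeration.
Variables (T : finType) (W : {set T}) (g : rel T) (s : seq T).

Hypotheses (sg : symmetric g) (sW : forall z, (z \in s) = (z \in W)).

(* Vertex v lives in the bags from its own position in s up to the last
   position of one of its neighbours; bag k collects the vertices alive at k. *)
Definition last_bag v := maxn (index v s) (\max_(w | (w \in W) && g v w) index w s).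
Definition bag k := [set v in W | index v s <= k <= last_bag v].
Definition bags := mkseq bag (size s).

Lemma index_lt v : v \in W -> index v s < size s.
Proof. by rewrite index_mem sW. Qed.

Lemma last_bag_lt v : v \in W -> last_bag v < size s.
Proof.
move=> vW; rewrite gtn_max index_lt //=.
by apply: bigmax_ltn => [|w /andP [wW _]]; rewrite ?index_lt ?(leq_ltn_trans _ (index_lt vW)).
Qed.

Lemma bags_decomp : 0 < size s -> path_decomp W g bags.
Proof.
move=> s0; rewrite /bags; split; rewrite ?size_mkseq //.
- by apply/allP => B /mapP [k _ ->]; apply/subsetP => v; rewrite inE => /andP [].
- move=> v vW; exists (index v s), (last_bag v); rewrite last_bag_lt // leq_maxl.
  by split=> // k k_lt; rewrite nth_mkseq // inE vW.
move=> u v uW vW guv; exists (maxn (index u s) (index v s)).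
  by rewrite gtn_max !index_lt.
have le_last a b : b \in W -> g a b -> index b s <= last_bag a.
  move=> bW gab; apply: leq_trans (leq_maxr _ _).
  by apply: (@leq_bigmax_cond _ (fun w => (w \in W) && g a w) (index^~ s)); rewrite bW gab.
rewrite nth_mkseq ?gtn_max ?index_lt // !inE uW vW ?leq_maxl ?leq_maxr /=.
by rewrite !geq_max ?leq_maxl ?leq_maxr ?le_last // sg.
Qed.

Lemma bag_sub_frontier d k : bag k \subset nth d s k |: frontier W g (prefix_set s k).
Proof.
apply/subsetP => v; rewrite /frontier /prefix_set inE => /and3P [vW vk klast].
rewrite in_setU1; case: (eqVneq v (nth d s k)) => //= nv.
have vlt : index v s < k.
  rewrite ltn_neqAle vk andbT; apply: contraNneq nv => <-.
  by rewrite nth_index ?sW.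
have [/existsP [w /andP [/andP [wW gvw] kw]] | none] :=
  boolP [exists w, ((w \in W) && g v w) && (k <= index w s)].
  by rewrite !inE vlt; apply/existsP; exists w; rewrite !inE -leqNgt kw wW gvw.
move: klast; rewrite /last_bag leq_max leqNgt vlt /= leqNgt => /negP [].
apply: bigmax_ltn => [|w Pw]; first exact: leq_ltn_trans vlt.
by move/existsPn: none => /(_ w); rewrite Pw /= -ltnNge.
Qed.

Lemma width_bags m : (forall k, k < size s -> #|bag k| <= m.+1) -> width bags <= m.
Proof.
move=> H; rewrite /width foldrE !big_map.
suff : \max_(k <- iota 0 (size s)) #|bag k| <= m.+1 by case: (\max_(_ <- _) _).
by apply/bigmax_leqP_seq => k; rewrite mem_iota => /andP [_ k_lt] _; exact: H.
Qed.

Lemma pw_le_frontier z m : z \in W -> index z s = 0 ->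
  (forall k, k < size s -> #|frontier W g (prefix_set s k)| <= m) -> pw W g z <= m.
Proof.
move=> zW z0 H; have s0 : 0 < size s by rewrite -z0 index_lt.
apply: pw_leP; apply/asboolP; exists bags; split.
- exact: bags_decomp.
- by rewrite /bags -(prednK s0) /= !inE zW z0.
apply: width_bags => k ks; apply: leq_trans (subset_leq_card (bag_sub_frontier z k)) _.
by rewrite cardsU1 -add1n; apply: leq_add; [exact: leq_b1 | exact: H].
Qed.

End Enumeration.

Section Separations.
Variables (T : finType) (V : {set T}) (e : rel T) (x y : T).
Hypotheses (se : symmetric e) (xV : x \in V) (yV : y \in V) (xy : x != y).
(* G is connected, and G + xy minus any vertex stays linked (no cutvertex). *)
Hypotheses (cV : connected V e) (lVz : forall z, z \in V -> linked (V :\ z) (addE e x y)).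

Definition xside (A : {set T}) :=
  [/\ x \in A, y \notin A, A \subset V, linked A e & linked (V :\: A) e].

Definition boundary (A : {set T}) : {set {set T}} :=
  [set [set u; w] | u in A, w in [set w in V :\: A | e u w]].

Lemma boundaryP (A : {set T}) p q :
  p \in A -> q \in V -> q \notin A -> e p q -> [set p; q] \in boundary A.
Proof. by move=> pA qV qA epq; apply/imset2P; exists p q; rewrite ?inE ?qA ?qV. Qed.

Lemma boundary_same_side (A : {set T}) u w :
  (u \in A) = (w \in A) -> [set u; w] \notin boundary A.
Proof.
move=> uw; apply/imset2P => [[a b aA]]; rewrite !inE => /andP [/andP [bA _] _] E.
have side c : c \in [set u; w] -> (c \in A) = (u \in A).
  by rewrite in_set2 => /orP [] /eqP ->.
by move: bA; rewrite (side b) ?E ?set22 // -(side a) ?E ?set21 // aA.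
Qed.

Lemma linked_V : linked V e.
Proof. by apply: ncomp_le1_linked; rewrite cV. Qed.

Lemma delE_sym (F : {set {set T}}) : symmetric (delE e F).
Proof. by move=> u v; rewrite /delE /= se setUC. Qed.

Lemma side_walk (A S : {set T}) (F : {set {set T}}) :
  F \subset boundary A -> S \subset V -> {in S &, forall p q, (p \in A) = (q \in A)} ->
  forall u w, connect (adj S e) u w -> connect (adj V (delE e F)) u w.
Proof.
move=> FA SV side; apply: connect_adj_mono => p q pS qS epq.
rewrite /adj /delE /= !(subsetP SV) // epq; apply: contraNN (boundary_same_side (side p q pS qS)).
exact: (subsetP FA).
Qed.

Lemma boundary_nonempty (A : {set T}) : xside A -> 0 < #|boundary A|.
Proof.
case=> xA yA AV _ _.
have [p [q [/and3P [pV qV epq] pA qA]]] :=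
  connect_cross (P := mem A) (linked_V xV yV) xA yA.
by apply/card_gt0P; exists [set p; q]; apply: boundaryP.
Qed.

(* The boundary of an x-side is an x--y bond: deleting it separates x from y,
   while restoring any one of its edges {a,b} reconnects everything through a--b. *)
Lemma boundary_bond (A : {set T}) : xside A -> xy_bond V e x y (boundary A).
Proof.
case=> xA yA AV lA lB.
have sep : ~~ connect (adj V (delE e (boundary A))) x y.
  apply/negP => /(connect_cross (P := mem A)) /(_ xA yA).
  case=> p [q [/and3P [pV qV /andP [epq nF]] pA qA]].
  by rewrite (boundaryP pA qV qA epq) in nF.
split=> //; split; rewrite ?cV.
- apply/subsetP => f /imset2P [a b aA]; rewrite !inE => /andP [/andP [_ bV] eab] ->.
  by apply/imset2P; exists a b; rewrite ?inE ?bV ?eab ?(subsetP AV a aA).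
- exact: ncomp_gt1 xV yV sep.
move=> F /properP [FA [f /imset2P [a b aA bAV ->] abF]].
move: bAV; rewrite inE => /andP [bAV eab].
apply/negP; rewrite -leqNgt; apply: linked_ncomp_le1; apply: linked_hub (delE_sym F) _ => u uV.
have walkA := side_walk FA AV (fun p q pA qA => etrans pA (esym qA)).
have walkB : forall u w, connect (adj (V :\: A) e) u w -> connect (adj V (delE e F)) u w.
  apply: (side_walk FA (subsetDl V A)) => p q.
  by rewrite !inE => /andP [/negbTE -> _] /andP [/negbTE -> _].
case uA: (u \in A); first exact: walkA (lA _ _ uA xA).
apply: connect_trans (walkB _ _ (lB u b _ bAV)) _; first by rewrite inE uA uV.
apply: connect_trans (connect1 _) (walkA _ _ (lA _ _ aA xA)).
have bV : b \in V by case/setDP: bAV.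
by rewrite /adj /delE /= bV (subsetP AV a aA) se eab setUC abF.
Qed.

(* Write H for V - A.  The stranded vertices of H - u are those that cannot
   reach y inside H - u. *)
Definition stranded (A : {set T}) u :=
  [set w in (V :\: A) :\ u | ~~ connect (adj ((V :\: A) :\ u) e) w y].

Definition addable (A : {set T}) u := [&& u \in V :\: A, u != y & [exists a in A, e u a]].

Lemma crossing_edge z (S : {set T}) r d : z \in V -> r \in S -> d \in V :\ z -> d \notin S ->
  S \subset V :\ z -> x \notin S -> y \notin S ->
  exists p q, [/\ p \in S, q \in V :\ z, q \notin S & e p q].
Proof.
move=> zV rS dV dS SV xS yS.
have [p [q [/and3P [pV qV epq] pS qS]]] :=
  connect_cross (P := mem S) (lVz zV (subsetP SV r rS) dV) rS dS.
exists p, q; split=> //.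
by case/or3P: epq => // /andP [/eqP pE _]; [case/negP: xS | case/negP: yS]; rewrite -pE.
Qed.

Lemma addable_exists (A : {set T}) : xside A -> (V :\: A) :\ y != set0 -> exists u, addable A u.
Proof.
case=> xA yA AV _ _ /set0Pn [h hH].
have HV : (V :\: A) :\ y \subset V :\ y by apply: setSD; apply: subsetDl.
have xVy : x \in V :\ y by rewrite in_setD1 xy xV.
have xH : x \notin (V :\: A) :\ y by rewrite !inE xA andbF.
have yH : y \notin (V :\: A) :\ y by rewrite setD11.
have [p [q [pH qV qH epq]]] := crossing_edge yV hH xVy xH HV xH yH.
move: pH qV qH; rewrite !inE => /and3P [py pA pV] /andP [qy qV].
rewrite qy qV andbT negbK => qA.
by exists p; rewrite /addable !inE py pA pV; apply/existsP; exists q; rewrite qA epq.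
Qed.

(* Some stranded vertex is adjacent to A: in G + xy - u the stranded set must be
   left by an edge, and that edge cannot go to the unstranded part of H - u. *)
Lemma stranded_attached (A : {set T}) u r : xside A -> addable A u -> r \in stranded A u ->
  exists2 p, p \in stranded A u & addable A p.
Proof.
case=> xA yA AV _ _ /and3P [uH uy _] rR.
have uV : u \in V by case/setDP: uH.
have yR : y \notin stranded A u by rewrite inE connect0 andbF.
have yVu : y \in V :\ u by rewrite in_setD1 eq_sym uy yV.
have RV : stranded A u \subset V :\ u.
  by apply/subsetP => w; rewrite !inE => /andP [/and3P [-> _ ->]].
have xR : x \notin stranded A u by rewrite !inE xA andbF.
have [p [q [pR qV qR epq]]] := crossing_edge uV rR yVu yR RV xR yR.
move: (pR); rewrite inE => /andP [pHu npy].
have qA : q \in A.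
  apply: contraNT npy => qA.
  have qHu : q \in (V :\: A) :\ u by move: qV; rewrite !inE qA => /andP [-> ->].
  have : connect (adj ((V :\: A) :\ u) e) q y by move: qR; rewrite inE qHu negbK.
  by apply: connect_trans; apply: connect1; rewrite /adj /= pHu qHu epq.
exists p => //; apply/and3P; split.
- by case/setD1P: pHu.
- by apply: contraNneq yR => <-.
- by apply/existsP; exists q; rewrite qA epq.
Qed.

(* Moving to a stranded vertex p strictly shrinks the stranded set: whatever
   reached y in H - u still does in H - p, and so does u itself. *)
Lemma stranded_proper (A : {set T}) u p : xside A -> addable A u -> p \in stranded A u ->
  stranded A p \proper stranded A u.
Proof.
case=> _ yA _ _ lB /and3P [uH uy _] pR.
move: (pR); rewrite inE => /andP [pHu npy].
have keep w : connect (adj ((V :\: A) :\ u) e) w y -> connect (adj ((V :\: A) :\ p) e) w y.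
  by move/(connect_avoid npy); apply: connect_adj_subset; apply: setSD; apply: subsetDl.
have yH : y \in V :\: A by rewrite inE yA yV.
have [b [/and3P [_ bH eub] by_]] := last_exit se uy (lB y u yH uH).
have uy_p : connect (adj ((V :\: A) :\ p) e) u y.
  apply: connect_trans (connect1 _) (keep b by_).
  have up : u != p by apply: contraTneq pHu => ->; rewrite setD11.
  have bp : b != p by apply: contraNneq npy => <-.
  by rewrite /adj /= !in_setD1 up bp uH bH eub.
apply/properP; split; last by exists p => //; rewrite inE setD11.
apply/subsetP => w; rewrite !inE => /andP [/andP [wp wH] nwy].
have wu : w != u by apply: contraNneq nwy => ->.
by rewrite wu wH /=; apply: contra nwy; apply: keep.
Qed.

(* An addable vertex whose removal strands nothing: one minimising the
   stranded set, by the two lemmas above. *)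
Lemma addable_unstranded (A : {set T}) : xside A -> (V :\: A) :\ y != set0 ->
  exists u, addable A u /\ stranded A u = set0.
Proof.
move=> sA ne; have [u0 au0] := addable_exists sA ne.
case: (@arg_minnP _ u0 (addable A) (fun u => #|stranded A u|) au0) => u au umin.
exists u; split=> //; apply/eqP; apply/negPn/negP => /set0Pn [r rR].
have [p pR ap] := stranded_attached sA au rR.
by have := proper_card (stranded_proper sA au pR); rewrite ltnNge umin.
Qed.

(* Adding an addable vertex that strands nothing keeps an x-side: the new
   vertex hangs on A, and everything left in H - v still reaches y. *)
Lemma xside_add (A : {set T}) v : xside A -> addable A v -> stranded A v = set0 ->
  xside (v |: A).
Proof.
case=> xA yA AV lA _ /and3P [vH vy /existsP [a /andP [aA eva]]] unstr.
split.
- by rewrite in_setU1 xA orbT.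
- by rewrite in_setU1 (eq_sym y) (negbTE vy).
- by rewrite subUset sub1set AV andbT; case/setDP: vH.
- apply: (linked_hub (h := a) se) => b.
  case/setU1P => [-> | bA]; first by apply: connect1; rewrite /adj /= !in_setU1 eqxx aA orbT eva.
  by apply: connect_adj_subset (lA _ _ bA aA); apply: subsetUr.
- have -> : V :\: (v |: A) = (V :\: A) :\ v by rewrite setDDl setUC.
  apply: (linked_hub (h := y) se) => w wH.
  by apply: contraFT (in_set0 w) => nc; rewrite -unstr inE wH nc.
Qed.

Lemma xside_growth n (A : {set T}) : #|(V :\: A) :\ y| <= n -> xside A ->
  exists t : seq T, (forall z, (z \in t) = (z \in (V :\: A) :\ y)) /\
    forall k, k <= size t -> xside (A :|: prefix_set t k).
Proof.
elim: n A => [|n IH] A small sA.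
  exists [::]; split=> [z | k].
    by move: small; rewrite leqn0 cards_eq0 => /eqP ->; rewrite inE.
  by rewrite leqn0 => /eqP ->; rewrite prefix_set0 setU0.
have [E0 | ne] := eqVneq ((V :\: A) :\ y) set0; first by apply: IH sA; rewrite E0 cards0.
have [v [av unstr]] := addable_unstranded sA ne.
have vin : v \in (V :\: A) :\ y by case/and3P: av => vH vy _; rewrite in_setD1 vy vH.
have rest : (V :\: (v |: A)) :\ y = ((V :\: A) :\ y) :\ v.
  by apply/setP => w; rewrite !inE negb_or; case: (w == v); case: (w == y).
have [|t [mt sides]] := IH (v |: A) _ (xside_add sA av unstr).
  by move: small; rewrite rest (cardsD1 v) vin.
exists (v :: t); split.
  by move=> z; rewrite in_cons mt rest in_setD1; case: eqVneq => [-> |].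
case=> [|k] kt; first by rewrite prefix_set0 setU0.
by rewrite prefix_set_cons setUCA setUA; apply: sides.
Qed.

Lemma ordering_exists : exists s : seq T,
  (forall z, (z \in s) = (z \in V :\ y)) /\ forall k, 0 < k <= size s -> xside (prefix_set s k).
Proof.
have sx : xside [set x].
  split; rewrite ?set11 ?in_set1 1?eq_sym ?sub1set //.
    by move=> a b /set1P -> /set1P ->.
  move=> a b aV bV; apply: connect_adj_mono (lVz xV aV bV) => p q pV qV.
  rewrite /adj /= pV qV; move: pV qV; rewrite !in_setD1 /addE /=.
  by move=> /andP [/negbTE -> _] /andP [/negbTE -> _]; rewrite !andbF !orbF.
have [t [mt sides]] := xside_growth (leqnn _) sx.
exists (x :: t); split.
  move=> z; rewrite in_cons mt !inE.
  by case: (eqVneq z x) => [-> | zx] //=; rewrite xy xV.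
by case=> // k /= kt; rewrite prefix_set_cons; apply: sides.
Qed.

(* Each frontier vertex owns a boundary edge, to a neighbour outside A. *)
Lemma frontier_card (A : {set T}) : #|frontier (V :\ y) e A| <= #|boundary A|.
Proof.
pose mate v := odflt v [pick w | (w \in (V :\ y) :\: A) && e v w].
have mateP v : v \in frontier (V :\ y) e A -> [set v; mate v] \in boundary A /\ mate v \notin A.
  rewrite inE => /andP [vA /existsP [w0 hw0]]; rewrite /mate.
  case: pickP => [w /andP [wB evw] | none]; last by move: (none w0); rewrite hw0.
  move: wB; rewrite !inE => /and3P [wA _ wV].
  by split => //; apply: boundaryP.
rewrite -(card_in_imset (f := fun v => [set v; mate v])).
  by apply: subset_leq_card; apply/subsetP => _ /imsetP [v /mateP [] ? _ ->].
move=> v1 v2 /[dup] h1 /mateP [_ m1] /mateP [_ m2] E.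
have : v1 \in [set v2; mate v2] by rewrite -E set21.
rewrite in_set2 => /orP [/eqP // | /eqP v1m]; move: h1; rewrite inE v1m => /andP [].
by rewrite (negbTE m2).
Qed.

Lemma pw_le_boundary : exists A, xside A /\ pw (V :\ y) e x <= #|boundary A|.
Proof.
have [s [ms sides]] := ordering_exists.
have xW : x \in V :\ y by rewrite in_setD1 xy xV.
have s0 : 0 < size s by move: xW; rewrite -ms; case: (s).
have [k0 k0s k0max] := exists_argmax (fun k => #|boundary (prefix_set s k.+1)|) s0.
exists (prefix_set s k0.+1); split; first by apply: sides.
apply: (pw_le_frontier se ms xW).
  by case: (sides 1 s0) => /=; rewrite inE ltnS leqn0 => /eqP.
case=> [|k] ks; first by rewrite prefix_set0 frontier0 cards0.
by apply: leq_trans (frontier_card _) (k0max _ (ltnW ks)).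
Qed.

(* Without cutvertices, an x-side whose boundary is a single edge {a,b} forces
   V = {x,y}: any further vertex on the side of a (resp. b) would make a
   (resp. b) a cutvertex. *)
Lemma thin_boundary (A : {set T}) : xside A -> (forall v, ~ cutvertex V e v) ->
  #|boundary A| <= 1 -> V :\ y \subset [set x].
Proof.
move=> sA ncv small; have [xA yA AV _ _] := sA.
have [_ /imset2P [a b aA bAV _]] := card_gt0P (boundary_nonempty sA).
move: bAV; rewrite inE => /andP [/setDP [bV bA] eab].
have aV := subsetP AV a aA.
have only_ab p q : p \in A -> q \in V -> q \notin A -> e p q -> p = a /\ q = b.
  move=> pA qV qA epq.
  have /setP E := card_le1_eqP small _ _ (boundaryP pA qV qA epq) (boundaryP aA bV bA eab).
  have : p \in [set a; b] by rewrite E set21.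
  have : q \in [set a; b] by rewrite E set22.
  rewrite !in_set2 => /orP [/eqP qa | /eqP ->]; first by move: qA; rewrite qa aA.
  by case/orP => /eqP pE //; move: pA; rewrite pE (negbTE bA).
have a_side v : v \in V -> v \in A -> v = a.
  move=> vV vA; apply/eqP/negPn/negP => va; apply: (ncv a).
  apply: (@thin_cut_cutvertex _ _ _ (mem A) a v b linked_V aV) => //.
  - by rewrite in_setD1 va vV.
  - by rewrite in_setD1 bV andbT; apply: contraNneq bA => ->.
  - by move=> p q pV qV pA qA epq; rewrite (proj1 (only_ab p q pA qV qA epq)) eqxx.
have b_side v : v \in V -> v \notin A -> v = b.
  move=> vV vA; apply/eqP/negPn/negP => vb; apply: (ncv b).
  apply: (@thin_cut_cutvertex _ _ _ (fun z => z \notin A) b v a linked_V bV) => //.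
  - by rewrite in_setD1 vb vV.
  - by rewrite in_setD1 aV andbT; apply: contraTneq aA => ->.
  - by rewrite negbK.
  - move=> p q pV qV pA /negbNE qA epq.
    by rewrite (proj2 (only_ab q p qA pV pA (etrans (se q p) epq))) eqxx.
apply/subsetP => v; rewrite in_setD1 in_set1 => /andP [vy vV].
case vA: (v \in A); first by rewrite (a_side v vV vA) -(a_side x xV xA).
by move: vy; rewrite (b_side v vV (negbT vA)) -(b_side y yV yA) eqxx.
Qed.

End Separations.

Theorem lemma3p4 (T : finType) (V : {set T}) (e : rel T) (x y : T) :
  symmetric e -> irreflexive e ->
  connected V e -> edges V e != set0 ->
  x \in V -> y \in V -> x != y ->
  (forall v, ~ cutvertex V (addE e x y) v) ->
  (exists F, xy_bond V e x y F /\ pw (V :\ y) e x + 2 <= 3 * #|F|) /\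
  ((forall v, ~ cutvertex V e v) ->
   exists F, xy_bond V e x y F /\ pw (V :\ y) e x + 3 <= 3 * #|F|).
Proof.
move=> se _ cV _ xV yV xy ncv.
have lVz : forall z, z \in V -> linked (V :\ z) (addE e x y).
  apply: no_cutvertex_linked ncv; apply: linked_sub (linked_V cV).
  by move=> u v euv; rewrite /addE /= euv.
have [A [sA pwA]] := pw_le_boundary se xV yV xy lVz.
have bond := boundary_bond se xV yV cV sA.
have F_gt0 := boundary_nonempty xV yV cV sA.
set F := boundary V e A in pwA bond F_gt0 *.
split; first by exists F; split=> //; lia.
move=> ncvG; exists F; split=> //.
have [F_ge2 | F_le1] := leqP 2 #|F|; first lia.
have Vy_le1 : #|V :\ y| <= 1.
  by rewrite -(cards1 x) subset_leq_card // (thin_boundary se xV yV cV sA ncvG) // -ltnS.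
have xVy : x \in V :\ y by rewrite in_setD1 xy xV.
have := pw_le_card e xVy; lia.
Qed.
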